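(* Let $p\ge 1$ and $c>0$ be constants. For $a>0$ let $x_a:[0,\infty)\to\mathbb{R}$ be the unique solution of $$x'''+c\,x^p\, x''=0,\qquad x(0)=0=x'(0),\quad x''(0)=a,$$ and let $h(a):=\lim_{t\to\infty}x_a'(t)$ (which exists and is finite). Define $$c_2:=\Gamma\!\left(\tfrac{1}{2p+1}\right)\left(\frac{2^p}{c\,(2p+1)^{2p}}\right)^{\frac{1}{2p+1}},\qquad c_3:=\Gamma\!\left(\tfrac{2}{2p+1}\right)(2p+1)^{\frac{1-2p}{2p+1}}\left(\frac{2^p}{c}\right)^{\frac{2}{2p+1}},$$ $$c_1:=\frac{c_3}{c_2}+\frac{\Gamma\big(1/(p+1)\big)}{c^{1/(p+1)}\,\big(c_2(p+1)\big)^{p/(p+1)}}.$$ Then for every $a>0$, $$c_2\, a^{(p+1)/(2p+1)}\le h(a)\le c_1\, a^{(p+1)/(2p+1)}.$$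
   Context: $\Gamma$ denotes the Euler Gamma function. *)

From Stdlib Require Import Reals.
From Coquelicot Require Import Coquelicot.
Open Scope R_scope.

Definition Gamma (s : R) : R :=
  RInt_gen (fun t => Rpower t (s - 1) * exp (- t))
           (at_right 0) (Rbar_locally p_infty).

(* x^p for real exponent p >= 1; convention: 0 for x <= 0
   (the solutions considered are > 0 on (0,oo), x(0)=0, so this only fixes 0^p = 0). *)
Definition rpow (x p : R) : R :=
  if Rlt_dec 0 x then Rpower x p else 0.

Definition is_solution (p c a : R) (x x1 x2 : R -> R) : Prop :=
  (forall t, 0 < t -> is_derive x t (x1 t)) /\
  (forall t, 0 < t -> is_derive x1 t (x2 t)) /\
  (forall t, 0 < t -> is_derive x2 t (- (c * rpow (x t) p * x2 t))) /\
  filterlim x (at_right 0) (locally (x 0)) /\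
  filterlim x1 (at_right 0) (locally (x1 0)) /\
  filterlim x2 (at_right 0) (locally (x2 0)) /\
  x 0 = 0 /\ x1 0 = 0 /\ x2 0 = a.

Definition const2 (p c : R) : R :=
  Gamma (1 / (2 * p + 1)) *
  Rpower (Rpower 2 p / (c * Rpower (2 * p + 1) (2 * p))) (1 / (2 * p + 1)).

Definition const3 (p c : R) : R :=
  Gamma (2 / (2 * p + 1)) *
  Rpower (2 * p + 1) ((1 - 2 * p) / (2 * p + 1)) *
  Rpower (Rpower 2 p / c) (2 / (2 * p + 1)).

Definition const1 (p c : R) : R :=
  const3 p c / const2 p c +
  Gamma (1 / (p + 1)) /
    (Rpower c (1 / (p + 1)) * Rpower (const2 p c * (p + 1)) (p / (p + 1))).

(* Along the solution, [x2 * exp (c * int_0^t x^p)] is constant, so [0 < x2 <= a]; hence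
   [x <= a t^2 / 2] and [x2 >= a exp (- K t^(2p+1))] with [K = c a^p / (2^p (2p+1))].
   Integrating twice, [x1 >= a int_0^t exp (- K s^(2p+1)) ds] and [x >= a I0 (t - T)], where
   [I0] and [I1] are the zeroth and first moments of [exp (- K s^(2p+1))] on [[0, oo)] and
   [T = I1 / I0].  Past [T] the damping rate [c x^p] is therefore at least
   [c (a I0 (t - T))^p], which forces [x2 <= a exp (- L (t - T)^(p+1))] with
   [L = c (a I0)^p / (p + 1)], and [x1 <= a T + a J] with [J = int_0^oo exp (- L s^(p+1)) ds].
   The nondecreasing [x1] thus converges to some [h] with [a I0 <= h <= a T + a J], and the
   substitution [u = K s^r] turns [I0], [I1] and [J] into the Gamma values that make up
   [c2 a^((p+1)/(2p+1))], [(c3 / c2) a^((p+1)/(2p+1))] and the second summand of [c1]. *)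

From Stdlib Require Import Reals Lra Lia Classical_Prop.
From Coquelicot Require Import Coquelicot.
Open Scope R_scope.

Lemma ball_Rabs (x e y : R) : ball x e y <-> Rabs (y - x) < e.
Proof. reflexivity. Qed.

Lemma ball_between (x e y : R) : ball x e y -> x - e < y < x + e.
Proof. intros H. pose proof (proj1 (Rabs_lt_between (y - x) e) H). lra. Qed.

Lemma is_derive_continuous (f : R -> R) t l : is_derive f t l -> continuous f t.
Proof. intros H. apply (ex_derive_continuous (V:=R_NormedModule)). now exists l. Qed.

Lemma continuous_Rmult (f g : R -> R) t :
  continuous f t -> continuous g t -> continuous (fun y => f y * g y) t.
Proof. apply (continuous_mult (K:=R_AbsRing)). Qed.

Lemma continuous_exp_comp (f : R -> R) t : continuous f t -> continuous (fun y => exp (f y)) t.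
Proof.
  intros H. apply (continuous_comp f exp); auto.
  apply (is_derive_continuous _ _ (exp (f t))), is_derive_exp.
Qed.

Lemma continuous_shift (f : R -> R) T t :
  continuous f (t - T) -> continuous (fun y => f (y - T)) t.
Proof.
  intros H. apply (continuous_comp (fun y => y - T) f); auto.
  apply (is_derive_continuous _ _ 1). auto_derive; auto; ring.
Qed.

Lemma is_derive_shift (f : R -> R) T t l :
  is_derive f (t - T) l -> is_derive (fun y => f (y - T)) t l.
Proof.
  intros H. replace l with (1 * l) by ring.
  apply (is_derive_comp f (fun y => y - T)); auto. auto_derive; auto; ring.
Qed.

Lemma is_derive_Rconst (k t : R) : is_derive (fun _ => k) t 0.
Proof. exact (is_derive_const (K:=R_AbsRing) (V:=R_NormedModule) k t). Qed.

Lemma is_derive_Rmult (f g : R -> R) t df dg : is_derive f t df -> is_derive g t dg ->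
  is_derive (fun y => f y * g y) t (df * g t + f t * dg).
Proof. intros Hf Hg. apply (is_derive_mult f g t df dg Hf Hg). intros; apply Rmult_comm. Qed.

Lemma is_derive_exp_comp (f : R -> R) t df :
  is_derive f t df -> is_derive (fun y => exp (f y)) t (df * exp (f t)).
Proof. intros H. apply (is_derive_comp exp f); auto. apply is_derive_exp. Qed.

Lemma filterlim_Rminus {T} {F : (T -> Prop) -> Prop} {FF : Filter F} (f g : T -> R) lf lg :
  filterlim f F (locally lf) -> filterlim g F (locally lg) ->
  filterlim (fun x => f x - g x) F (locally (lf - lg)).
Proof.
  intros Hf Hg.
  exact (filterlim_comp_2 f (fun x => opp (g x)) plus Hf
           (filterlim_comp _ _ _ g opp _ _ _ Hg (filterlim_opp (V:=R_NormedModule) lg))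
           (filterlim_plus (V:=R_NormedModule) lf (opp lg))).
Qed.

Lemma filterlim_Rmult_l {T} {F : (T -> Prop) -> Prop} (f : T -> R) k l :
  filterlim f F (locally l) -> filterlim (fun x => k * f x) F (locally (k * l)).
Proof.
  intros Hf. exact (filterlim_comp _ _ _ f (scal k) _ _ _ Hf (filterlim_scal_r (V:=R_NormedModule) k l)).
Qed.

Definition right_cont (f : R -> R) a := filterlim f (at_right a) (locally (f a)).

Lemma continuous_right_cont f a : continuous f a -> right_cont f a.
Proof. intros H P HP. destruct (H P HP) as [d Hd]. exists d. auto. Qed.

Lemma is_derive_right_cont f a l : is_derive f a l -> right_cont f a.
Proof. intros H. now apply continuous_right_cont, (is_derive_continuous f a l). Qed.

Lemma right_cont_mult f g a : right_cont f a -> right_cont g a -> right_cont (fun t => f t * g t) a.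
Proof. intros Hf Hg. apply (filterlim_comp_2 f g Rmult Hf Hg (filterlim_mult (K:=R_AbsRing) _ _)). Qed.

Lemma nondecreasing_of_derive_ge0 (f df : R -> R) a :
  (forall t, a < t -> is_derive f t (df t)) -> (forall t, a < t -> 0 <= df t) ->
  forall s t, a < s -> s <= t -> f s <= f t.
Proof.
  intros Hd Hp s t Hs Hst.
  destruct (MVT_gen f s t df) as [u [Hu Heq]]; rewrite Rmin_left, Rmax_right in * by lra.
  - intros; apply Hd; lra.
  - intros y Hy. apply continuity_pt_filterlim, (is_derive_continuous f y (df y)), Hd; lra.
  - assert (0 <= df u * (t - s)) by (apply Rmult_le_pos; [apply Hp|]; lra). lra.
Qed.

(* The endpoint [a] is reached by right continuity: [f a > f t] would persist at points
   just right of [a], contradicting monotonicity on [(a, t]]. *)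
Lemma nondecreasing_of_derive_ge0_right_cont (f df : R -> R) a :
  (forall t, a < t -> is_derive f t (df t)) -> (forall t, a < t -> 0 <= df t) ->
  right_cont f a -> forall s t, a <= s -> s <= t -> f s <= f t.
Proof.
  intros Hd Hp Hc s t Hs Hst.
  destruct (Rlt_or_le a s) as [Has|Has].
  { now apply (nondecreasing_of_derive_ge0 f df a). }
  replace s with a by lra.
  destruct (Rle_or_lt (f a) (f t)) as [H|H]; [exact H|exfalso].
  destruct (proj1 (filterlim_locally f (f a)) Hc (mkposreal _ (proj2 (Rlt_0_minus _ _) H)))
    as [d Hdl].
  assert (Hat : a < t) by (destruct (Req_dec a t); [subst; lra | lra]).
  set (y := Rmin (a + d / 2) t).
  assert (Hy : a < y <= t) by (unfold y, Rmin; destruct Rle_dec; destruct d; simpl in *; lra).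
  assert (Hball : ball a d y).
  { assert (y <= a + d / 2) by apply Rmin_l.
    apply ball_Rabs. rewrite Rabs_pos_eq by lra. destruct d; simpl in *; lra. }
  specialize (Hdl y Hball (proj1 Hy)). apply ball_between in Hdl. cbn [pos] in Hdl.
  assert (f y <= f t) by (apply (nondecreasing_of_derive_ge0 f df a Hd Hp); lra).
  lra.
Qed.

Lemma le_of_derive_le (f g df dg : R -> R) a :
  (forall t, a < t -> is_derive f t (df t)) -> (forall t, a < t -> is_derive g t (dg t)) ->
  (forall t, a < t -> df t <= dg t) -> right_cont f a -> right_cont g a -> f a <= g a ->
  forall t, a <= t -> f t <= g t.
Proof.
  intros Hf Hg Hle Cf Cg H0 t Ht.
  enough (g a - f a <= g t - f t) by lra.
  apply (nondecreasing_of_derive_ge0_right_cont (fun t => g t - f t) (fun t => dg t - df t) a);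
    try lra.
  - intros s Hs. apply (is_derive_minus g f); auto.
  - intros s Hs. specialize (Hle s Hs). lra.
  - now apply filterlim_Rminus.
Qed.

Lemma is_lim_of_nondecreasing_bounded (f : R -> R) B :
  (forall s t, 0 <= s -> s <= t -> f s <= f t) -> (forall t, 0 <= t -> f t <= B) ->
  exists l : R, is_lim f p_infty l /\ (forall t, 0 <= t -> f t <= l).
Proof.
  intros Hm Hb.
  set (E := fun y => exists t, 0 <= t /\ y = f t).
  destruct (completeness E) as [l [Hub Hlub]].
  { exists B. intros y [t [Ht ->]]. now apply Hb. }
  { exists (f 0), 0. split; [lra|reflexivity]. }
  assert (Hle : forall t, 0 <= t -> f t <= l) by (intros t Ht; apply Hub; now exists t).
  exists l. split; [|exact Hle].
  apply (proj2 (filterlim_locally f l)). intros eps.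
  assert (Hex : exists t0, 0 <= t0 /\ l - eps < f t0).
  { apply NNPP. intros Hno.
    assert (l <= l - eps).
    { apply Hlub. intros y [t [Ht ->]]. apply Rnot_lt_le. intros Hlt. apply Hno. now exists t. }
    destruct eps; simpl in *; lra. }
  destruct Hex as [t0 [Ht0 Hf0]].
  exists t0. intros t Ht. apply ball_Rabs, Rabs_lt_between.
  assert (f t0 <= f t) by (apply Hm; lra). assert (f t <= l) by (apply Hle; lra).
  destruct eps; simpl in *; lra.
Qed.

Lemma is_lim_le_eventually (f g : R -> R) (l m t0 : R) :
  is_lim f p_infty l -> is_lim g p_infty m -> (forall t, t0 <= t -> f t <= g t) -> l <= m.
Proof.
  intros Hf Hg H. apply (is_lim_le_loc f g p_infty l m); auto. exists t0. intros; apply H; lra.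
Qed.

Lemma Rpower_gt0 x y : 0 < Rpower x y.
Proof. apply exp_pos. Qed.

Lemma rpow_eq_Rpower x r : 0 < x -> rpow x r = Rpower x r.
Proof. intros H; unfold rpow; destruct Rlt_dec; [reflexivity | lra]. Qed.

Lemma rpow_nonpos x r : x <= 0 -> rpow x r = 0.
Proof. intros H; unfold rpow; destruct Rlt_dec; [lra | reflexivity]. Qed.

Lemma rpow_ge0 x r : 0 <= rpow x r.
Proof. unfold rpow; destruct Rlt_dec; [left; apply Rpower_gt0 | lra]. Qed.

Lemma rpow_le x y r : x <= y -> 0 <= r -> rpow x r <= rpow y r.
Proof.
  intros Hxy Hr. destruct (Rle_or_lt x 0) as [Hx|Hx].
  - rewrite rpow_nonpos by lra. apply rpow_ge0.
  - rewrite !rpow_eq_Rpower by lra. apply Rle_Rpower_l; lra.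
Qed.

Lemma exp_le_compat x y : x <= y -> exp x <= exp y.
Proof. intros [H|H]; [left; now apply exp_increasing | now subst]. Qed.

Lemma Rpower_le_self y r : 0 < y <= 1 -> 1 <= r -> Rpower y r <= y.
Proof.
  intros Hy Hr. unfold Rpower. rewrite <- (exp_ln y) at 2 by lra.
  assert (ln y <= 0).
  { rewrite <- ln_1. destruct (Req_dec y 1) as [->|]; [lra|]. left; apply ln_increasing; lra. }
  apply exp_le_compat. nra.
Qed.

Lemma is_derive_Rpower x r : 0 < x -> is_derive (fun y => Rpower y r) x (r * Rpower x (r - 1)).
Proof. intros H. apply is_derive_Reals. now apply derivable_pt_lim_power. Qed.

Lemma locally_gt x a : a < x -> locally x (fun y => a < y).
Proof.
  intros H. exists (mkposreal (x - a) ltac:(lra)). intros y Hy.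
  apply ball_between in Hy. cbn [pos] in Hy. lra.
Qed.

Lemma locally_lt x a : x < a -> locally x (fun y => y < a).
Proof.
  intros H. exists (mkposreal (a - x) ltac:(lra)). intros y Hy.
  apply ball_between in Hy. cbn [pos] in Hy. lra.
Qed.

Lemma is_derive_rpow x r : 0 < x -> is_derive (fun y => rpow y r) x (r * Rpower x (r - 1)).
Proof.
  intros H. apply (is_derive_ext_loc (fun y => Rpower y r)).
  - apply (filter_imp (fun y => 0 < y)); [|now apply locally_gt].
    intros y Hy. now rewrite rpow_eq_Rpower.
  - now apply is_derive_Rpower.
Qed.

(* At [0] the exponent [r >= 1] gives [rpow y r <= |y|] near [0]. *)
Lemma continuous_rpow r x : 1 <= r -> continuous (fun y => rpow y r) x.
Proof.
  intros Hr. destruct (Rtotal_order x 0) as [Hx|[Hx|Hx]].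
  - apply (continuous_ext_loc (fun y => rpow y r) (fun _ => 0)).
    + apply (filter_imp (fun y => y < 0)); [|now apply locally_lt].
      intros y Hy. now rewrite rpow_nonpos by lra.
    + apply continuous_const.
  - subst x. intros P [e He]. exists (mkposreal (Rmin 1 e) (Rmin_pos _ _ Rlt_0_1 (cond_pos e))).
    intros y Hy. apply He, ball_Rabs. apply ball_between in Hy. cbn [pos] in Hy.
    pose proof (Rmin_l 1 e). pose proof (Rmin_r 1 e).
    rewrite (rpow_nonpos 0 r), Rminus_0_r by lra.
    destruct (Rle_or_lt y 0) as [Hy0|Hy0].
    + rewrite rpow_nonpos, Rabs_R0 by lra. apply cond_pos.
    + rewrite rpow_eq_Rpower, Rabs_pos_eq by (lra || left; apply Rpower_gt0).
      assert (Rpower y r <= y) by (apply Rpower_le_self; lra). lra.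
  - apply (is_derive_continuous _ _ _ (is_derive_rpow x r Hx)).
Qed.

Definition stretched_exp (r K : R) (m : nat) (t : R) := t ^ m * exp (- (K * rpow t r)).

Definition moment (r K : R) (m : nat) (T : R) := RInt (stretched_exp r K m) 0 T.

Section Moments.

Variables (r K : R) (m : nat).
Hypothesis hr : 1 <= r.

Lemma continuous_stretched_exp t : continuous (stretched_exp r K m) t.
Proof.
  apply continuous_Rmult.
  - apply (ex_derive_continuous (V:=R_NormedModule)). auto_derive; auto.
  - apply continuous_exp_comp, (continuous_opp (V:=R_NormedModule)), continuous_Rmult.
    + apply continuous_const.
    + now apply continuous_rpow.
Qed.

Lemma stretched_exp_ge0 t : 0 <= t -> 0 <= stretched_exp r K m t.
Proof. intros H. apply Rmult_le_pos; [now apply pow_le | left; apply exp_pos]. Qed.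

Lemma stretched_exp_gt0 t : 0 < t -> 0 < stretched_exp r K m t.
Proof. intros H. apply Rmult_lt_0_compat; [now apply pow_lt | apply exp_pos]. Qed.

Lemma ex_RInt_stretched_exp u v : ex_RInt (stretched_exp r K m) u v.
Proof. apply (ex_RInt_continuous (V:=R_CompleteNormedModule)). intros; apply continuous_stretched_exp. Qed.

Lemma is_derive_moment t : is_derive (moment r K m) t (stretched_exp r K m t).
Proof.
  apply (is_derive_RInt _ _ 0); [|apply continuous_stretched_exp].
  apply filter_forall. intros b. apply (RInt_correct (V:=R_CompleteNormedModule)), ex_RInt_stretched_exp.
Qed.

Lemma moment_0 : moment r K m 0 = 0.
Proof. exact (RInt_point 0 (stretched_exp r K m)). Qed.

Lemma moment_nondecreasing s t : 0 <= s -> s <= t -> moment r K m s <= moment r K m t.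
Proof.
  apply (nondecreasing_of_derive_ge0_right_cont _ (stretched_exp r K m) 0).
  - intros; apply is_derive_moment.
  - intros; apply stretched_exp_ge0; lra.
  - apply (is_derive_right_cont _ 0 _ (is_derive_moment 0)).
Qed.

End Moments.

Lemma exp_neg_le_inv_sq y : 0 < y -> exp (- y) <= 4 / (y * y).
Proof.
  intros Hy. rewrite exp_Ropp.
  assert (H1 : 1 + y / 2 < exp (y / 2)) by (apply exp_ineq1; lra).
  assert (H2 : exp y = exp (y / 2) * exp (y / 2)) by (rewrite <- exp_plus; f_equal; field).
  assert (H3 : y * y / 4 < exp y) by (rewrite H2; nra).
  assert (0 < exp y) by apply exp_pos.
  apply (Rmult_le_reg_l (exp y * (y * y))); [apply Rmult_lt_0_compat; nra|].
  replace (exp y * (y * y) * / exp y) with (y * y) by (field; lra).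
  replace (exp y * (y * y) * (4 / (y * y))) with (4 * exp y) by (field; lra). lra.
Qed.

Definition moment_bound (K : R) := 4 + 16 / (K * K).

Lemma stretched_exp_decay r K m t : 2 <= r -> 0 < K -> (m <= 1)%nat -> 0 <= t ->
  stretched_exp r K m t * ((1 + t) * (1 + t)) <= moment_bound K.
Proof.
  intros Hr HK Hm Ht. unfold stretched_exp, moment_bound.
  assert (HC : 0 <= 16 / (K * K)) by (apply Rle_mult_inv_pos; nra).
  assert (He0 : 0 < exp (- (K * rpow t r))) by apply exp_pos.
  destruct (Rle_or_lt t 1) as [Ht1|Ht1].
  - assert (exp (- (K * rpow t r)) <= 1).
    { rewrite <- exp_0. apply exp_le_compat.
      assert (0 <= K * rpow t r) by (apply Rmult_le_pos; [lra | apply rpow_ge0]). lra. }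
    assert (0 <= t ^ m <= 1) by (destruct m as [|[|m]]; simpl; lra || lia).
    assert (0 <= t ^ m * exp (- (K * rpow t r)) <= 1) by (split; nra).
    nra.
  - rewrite rpow_eq_Rpower in * by lra.
    assert (Htr : t * t <= Rpower t r).
    { replace (t * t) with (Rpower t (INR 2)) by (rewrite Rpower_pow by lra; simpl; ring).
      apply Rle_Rpower; simpl; lra. }
    assert (Hy0 : 0 < K * (t * t)) by (apply Rmult_lt_0_compat; nra).
    assert (Hexp : exp (- (K * Rpower t r)) <= 4 / ((K * (t * t)) * (K * (t * t)))).
    { eapply Rle_trans; [apply exp_neg_le_inv_sq; nra|].
      apply Rmult_le_compat_l; [lra|]. apply Rinv_le_contravar; [nra|].
      apply Rmult_le_compat; nra. }
    assert (0 <= t ^ m <= t) by (destruct m as [|[|m]]; simpl; lra || lia).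
    assert (Hprod : t ^ m * exp (- (K * Rpower t r)) <= t * (4 / ((K * (t * t)) * (K * (t * t)))))
      by (apply Rmult_le_compat; lra).
    assert (Hsq : (1 + t) * (1 + t) <= 4 * (t * t)) by nra.
    assert (Hfin : t * (4 / ((K * (t * t)) * (K * (t * t)))) * (4 * (t * t)) = 16 / (K * K) / t)
      by (field; lra).
    assert (16 / (K * K) / t <= 16 / (K * K)).
    { assert (/ t <= 1) by (rewrite <- Rinv_1; apply Rinv_le_contravar; lra).
      unfold Rdiv at 1. rewrite <- (Rmult_1_r (16 / (K * K))) at 2.
      apply Rmult_le_compat_l; lra. }
    assert (0 <= t ^ m * exp (- (K * Rpower t r))) by (apply Rmult_le_pos; lra).
    assert (t ^ m * exp (- (K * Rpower t r)) * ((1 + t) * (1 + t))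
            <= t * (4 / ((K * (t * t)) * (K * (t * t)))) * (4 * (t * t)))
      by (apply Rmult_le_compat; nra).
    lra.
Qed.

(* Compare with [moment_bound K * (1 - 1 / (1 + T))], whose derivative dominates by
   [stretched_exp_decay]. *)
Lemma moment_le_bound r K m T : 2 <= r -> 0 < K -> (m <= 1)%nat -> 0 <= T ->
  moment r K m T <= moment_bound K.
Proof.
  intros Hr HK Hm HT.
  set (C := moment_bound K).
  assert (HC : 0 <= C).
  { unfold C, moment_bound. assert (0 <= 16 / (K * K)) by (apply Rle_mult_inv_pos; nra). lra. }
  assert (Hd : forall t, 0 <= t -> is_derive (fun t => C * (1 - / (1 + t))) t (C / ((1 + t) * (1 + t))))
    by (intros t Ht; auto_derive; [lra | field; lra]).
  assert (HTle : moment r K m T <= C * (1 - / (1 + T))).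
  { apply (le_of_derive_le (moment r K m) (fun t => C * (1 - / (1 + t)))
             (stretched_exp r K m) (fun t => C / ((1 + t) * (1 + t))) 0); auto.
    - intros t _. apply is_derive_moment; lra.
    - intros t Ht. apply Hd; lra.
    - intros t Ht. assert (0 < (1 + t) * (1 + t)) by nra.
      apply (Rmult_le_reg_r ((1 + t) * (1 + t))); auto.
      unfold Rdiv. rewrite Rmult_assoc, Rinv_l, Rmult_1_r by lra. apply stretched_exp_decay; auto; lra.
    - apply (is_derive_right_cont _ 0 _ (is_derive_moment r K m ltac:(lra) 0)).
    - apply (is_derive_right_cont _ 0 _ (Hd 0 (Rle_refl 0))).
    - rewrite moment_0, Rplus_0_r, Rinv_1 by lra. lra. }
  assert (0 < / (1 + T)) by (apply Rinv_0_lt_compat; lra).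
  nra.
Qed.

Lemma moment_limit r K m : 2 <= r -> 0 < K -> (m <= 1)%nat ->
  exists I : R, 0 < I /\ is_lim (moment r K m) p_infty I /\
    forall T, 0 <= T -> moment r K m T <= I.
Proof.
  intros Hr HK Hm.
  destruct (is_lim_of_nondecreasing_bounded (moment r K m) (moment_bound K)) as [I [HI HIb]].
  - apply moment_nondecreasing; lra.
  - intros; now apply moment_le_bound.
  - exists I. split; [|split; auto].
    assert (H1 : moment r K m (1 / 2) < moment r K m 1).
    { destruct (MVT_gen (moment r K m) (1 / 2) 1 (stretched_exp r K m)) as [u [Hu Heq]];
        rewrite Rmin_left, Rmax_right in * by lra.
      - intros; apply is_derive_moment; lra.
      - intros y _. apply continuity_pt_filterlim.
        apply (is_derive_continuous _ y _ (is_derive_moment r K m ltac:(lra) y)).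
      - assert (0 < stretched_exp r K m u) by (apply stretched_exp_gt0; lra). lra. }
    assert (moment r K m 0 <= moment r K m (1 / 2)) by (apply moment_nondecreasing; lra).
    assert (moment r K m 1 <= I) by (apply HIb; lra).
    rewrite moment_0 in * by lra. lra.
Qed.

Definition gamma_integrand (s t : R) := Rpower t (s - 1) * exp (- t).

Lemma continuous_gamma_integrand s t : 0 < t -> continuous (gamma_integrand s) t.
Proof.
  intros Ht. apply continuous_Rmult.
  - apply (is_derive_continuous _ _ _ (is_derive_Rpower t (s - 1) Ht)).
  - apply continuous_exp_comp, (continuous_opp (V:=R_NormedModule)), continuous_id.
Qed.

Definition scaled_root (r K u : R) := Rpower (u / K) (1 / r).

Section ScaledRoot.

Variables r K : R.
Hypotheses (hr : 0 < r) (hK : 0 < K).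

Lemma scaled_root_pow u : 0 < u -> K * Rpower (scaled_root r K u) r = u.
Proof.
  intros Hu. unfold scaled_root. rewrite Rpower_mult.
  replace (1 / r * r) with 1 by (field; lra). rewrite Rpower_1; [field; lra|].
  apply Rdiv_lt_0_compat; lra.
Qed.

Lemma scaled_root_of_pow t : 0 < t -> scaled_root r K (K * Rpower t r) = t.
Proof.
  intros Ht. unfold scaled_root. replace (K * Rpower t r / K) with (Rpower t r) by (field; lra).
  rewrite Rpower_mult. replace (r * (1 / r)) with 1 by (field; lra). now apply Rpower_1.
Qed.

Lemma scaled_root_lt u v : 0 < u < v -> scaled_root r K u < scaled_root r K v.
Proof.
  intros Huv. apply Rlt_Rpower_l; [apply Rdiv_lt_0_compat; lra|].
  split; [apply Rdiv_lt_0_compat|apply Rmult_lt_compat_r; [apply Rinv_0_lt_compat|]]; lra.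
Qed.

Lemma filterlim_scaled_root_0 : filterlim (scaled_root r K) (at_right 0) (locally 0).
Proof.
  apply filterlim_locally. intros eps.
  assert (Hd : 0 < K * Rpower eps r) by (apply Rmult_lt_0_compat; [lra | apply Rpower_gt0]).
  exists (mkposreal _ Hd). intros u Hu Hu0. apply ball_between in Hu. cbn [pos] in Hu.
  apply ball_Rabs. rewrite Rminus_0_r, Rabs_pos_eq by (left; apply Rpower_gt0).
  rewrite <- (scaled_root_of_pow eps) by apply cond_pos.
  apply scaled_root_lt. lra.
Qed.

Lemma filterlim_scaled_root_infty :
  filterlim (scaled_root r K) (Rbar_locally p_infty) (Rbar_locally p_infty).
Proof.
  intros P [M HM]. set (M' := Rmax M 1).
  exists (K * Rpower M' r). intros u Hu. apply HM.
  assert (0 < M') by (unfold M'; generalize (Rmax_r M 1); lra).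
  assert (M <= M') by apply Rmax_l.
  assert (0 < K * Rpower M' r) by (apply Rmult_lt_0_compat; [lra | apply Rpower_gt0]).
  assert (scaled_root r K (K * Rpower M' r) = M') by (apply scaled_root_of_pow; lra).
  assert (scaled_root r K (K * Rpower M' r) < scaled_root r K u) by (apply scaled_root_lt; lra).
  lra.
Qed.

End ScaledRoot.

Lemma gamma_integrand_subst r K m s y : 0 < r -> 0 < K -> s * r = INR m + 1 -> 0 < y ->
  K * (r * Rpower y (r - 1)) * gamma_integrand s (K * Rpower y r)
  = r * Rpower K s * stretched_exp r K m y.
Proof.
  intros Hr HK Hs Hy. unfold gamma_integrand, stretched_exp. rewrite rpow_eq_Rpower by lra.
  rewrite <- Rpower_mult_distr, Rpower_mult, <- (Rpower_pow m y) by (try apply Rpower_gt0; lra).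
  replace (INR m) with ((r - 1) + r * (s - 1)) by lra.
  replace (Rpower K s) with (K * Rpower K (s - 1)).
  - rewrite Rpower_plus. ring.
  - replace s with (1 + (s - 1)) at 2 by ring. now rewrite Rpower_plus, Rpower_1.
Qed.

(* Substitution [t = K y^r] in the Gamma integral. *)
Lemma RInt_gamma_integrand r K m s e M : 1 <= r -> 0 < K -> s * r = INR m + 1 -> 0 < e -> 0 < M ->
  RInt (gamma_integrand s) e M =
  r * Rpower K s * (moment r K m (scaled_root r K M) - moment r K m (scaled_root r K e)).
Proof.
  intros Hr HK Hs He HM.
  set (a := scaled_root r K e). set (b := scaled_root r K M).
  assert (Ha : 0 < a) by apply Rpower_gt0. assert (Hb : 0 < b) by apply Rpower_gt0.
  set (k := r * Rpower K s).
  assert (Hpos : forall x, Rmin a b <= x <= Rmax a b -> 0 < x)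
    by (intros x Hx; unfold Rmin in Hx; destruct Rle_dec; lra).
  assert (Hsubst : is_RInt (fun y => k * stretched_exp r K m y) a b (RInt (gamma_integrand s) e M)).
  { replace (RInt (gamma_integrand s) e M)
      with (RInt (gamma_integrand s) (K * Rpower a r) (K * Rpower b r))
      by (unfold a, b; rewrite !scaled_root_pow by lra; reflexivity).
    apply (is_RInt_ext (fun y => scal (K * (r * Rpower y (r - 1))) (gamma_integrand s (K * Rpower y r)))).
    - intros x Hx. apply gamma_integrand_subst; auto; try lra. apply Hpos; lra.
    - apply (is_RInt_comp (V:=R_CompleteNormedModule) (gamma_integrand s) (fun y => K * Rpower y r)).
      + intros x Hx. apply continuous_gamma_integrand.
        apply Rmult_lt_0_compat; [lra | apply Rpower_gt0].
      + intros x Hx. assert (0 < x) by auto. split.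
        * apply (is_derive_scal (fun y => Rpower y r)). now apply is_derive_Rpower.
        * apply (continuous_scal_r (V:=R_NormedModule)), continuous_Rmult; [apply continuous_const|].
          apply (is_derive_continuous _ _ _ (is_derive_Rpower x (r - 1) ltac:(lra))). }
  assert (Hscal : is_RInt (fun y => k * stretched_exp r K m y) a b (k * RInt (stretched_exp r K m) a b))
    by (apply (is_RInt_scal (V:=R_NormedModule)), (RInt_correct (V:=R_CompleteNormedModule)),
              ex_RInt_stretched_exp; lra).
  rewrite <- (is_RInt_unique _ _ _ _ Hsubst), (is_RInt_unique _ _ _ _ Hscal). f_equal.
  assert (C := RInt_Chasles (V:=R_CompleteNormedModule) (stretched_exp r K m) 0 a b
                 (ex_RInt_stretched_exp r K m ltac:(lra) 0 a) (ex_RInt_stretched_exp r K m ltac:(lra) a b)).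
  unfold plus in C; simpl in C. unfold moment. lra.
Qed.

Lemma Gamma_eq_moment_limit r K m s (I : R) : 1 <= r -> 0 < K -> s * r = INR m + 1 ->
  is_lim (moment r K m) p_infty I -> Gamma s = r * Rpower K s * I.
Proof.
  intros Hr HK Hs HI. unfold Gamma.
  apply (is_RInt_gen_unique (V:=R_CompleteNormedModule)).
  apply (filterlimi_lim_ext_loc (fun ab => RInt (gamma_integrand s) (fst ab) (snd ab))).
  { apply (Filter_prod _ _ _ (fun e => 0 < e) (fun M => 0 < M)).
    - exists (mkposreal 1 Rlt_0_1). auto.
    - exists 0. auto.
    - intros e M He HM. apply (RInt_correct (V:=R_CompleteNormedModule)).
      apply (ex_RInt_continuous (V:=R_CompleteNormedModule)). intros z Hz.
      apply continuous_gamma_integrand. cbn [fst snd] in Hz. unfold Rmin, Rmax in Hz; destruct (Rle_dec e M); lra. }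
  apply (filterlim_ext_loc (fun ab => r * Rpower K s *
    (moment r K m (scaled_root r K (snd ab)) - moment r K m (scaled_root r K (fst ab))))).
  { apply (Filter_prod _ _ _ (fun e => 0 < e) (fun M => 0 < M)).
    - exists (mkposreal 1 Rlt_0_1). auto.
    - exists 0. auto.
    - intros e M He HM. symmetry. now apply RInt_gamma_integrand. }
  replace (r * Rpower K s * I) with (r * Rpower K s * (I - moment r K m 0))
    by (rewrite moment_0 by lra; ring).
  apply filterlim_Rmult_l, filterlim_Rminus.
  - apply (filterlim_comp _ _ _ snd (fun u => moment r K m (scaled_root r K u)) _
             (Rbar_locally p_infty)); [apply filterlim_snd|].
    apply (filterlim_comp _ _ _ _ _ _ _ _ (filterlim_scaled_root_infty r K ltac:(lra) HK) HI).
  - apply (filterlim_comp _ _ _ fst (fun u => moment r K m (scaled_root r K u)) _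
             (at_right 0)); [apply filterlim_fst|].
    apply (filterlim_comp _ _ _ _ _ _ _ _ (filterlim_scaled_root_0 r K ltac:(lra) HK)).
    apply (is_derive_continuous _ _ _ (is_derive_moment r K m Hr 0)).
Qed.

Lemma moment_tail_le r K (I0 I1 t : R) : 1 <= r ->
  is_lim (moment r K 0) p_infty I0 -> is_lim (moment r K 1) p_infty I1 -> 0 <= t ->
  moment r K 1 t - t * moment r K 0 t <= I1 - t * I0.
Proof.
  intros Hr HI0 HI1 Ht.
  set (D := fun U => moment r K 1 U - t * moment r K 0 U).
  assert (HD : forall U, is_derive D U (stretched_exp r K 1 U - t * stretched_exp r K 0 U))
    by (intros U; apply (is_derive_minus _ (fun U => t * moment r K 0 U)),
         (is_derive_scal (moment r K 0)); apply is_derive_moment; lra).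
  apply (is_lim_le_eventually (fun _ => D t) D (D t) (I1 - t * I0) t).
  - apply is_lim_const.
  - apply (is_lim_minus _ _ _ I1 (t * I0)); [exact HI1 | apply (is_lim_scal_l _ t _ I0 HI0) | reflexivity].
  - (* [D' U = (U - t) exp (- K U^r)] is nonnegative for [U >= t]. *)
    intros U HU. cbv beta.
    apply (nondecreasing_of_derive_ge0_right_cont D
             (fun U => stretched_exp r K 1 U - t * stretched_exp r K 0 U) t); try lra.
    + intros V _. apply HD.
    + intros V HV. unfold stretched_exp. simpl.
      assert (0 < exp (- (K * rpow V r))) by apply exp_pos. nra.
    + apply (is_derive_right_cont D t _ (HD t)).
Qed.

(* The solution is only known on [[0, oo)]; freezing it to the left of [0] makes it
   continuous everywhere, so that its integral from [0] can be differentiated. *)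
Lemma continuous_freeze_left (f : R -> R) :
  (forall t, 0 < t -> continuous f t) -> right_cont f 0 ->
  forall t, continuous (fun y => f (Rmax y 0)) t.
Proof.
  intros Hc H0 t. destruct (Rtotal_order t 0) as [Ht|[Ht|Ht]].
  - apply (continuous_ext_loc _ (fun _ => f 0)); [|apply continuous_const].
    apply (filter_imp (fun y => y < 0)); [|now apply locally_lt].
    intros y Hy. now rewrite Rmax_right by lra.
  - subst t. intros P HP. rewrite Rmax_right in HP by lra.
    destruct (H0 P HP) as [d Hd]. exists d. intros y Hy.
    destruct (Rle_or_lt y 0) as [Hy0|Hy0].
    + rewrite Rmax_right by lra. now apply locally_singleton.
    + rewrite Rmax_left by lra. now apply Hd.
  - apply (continuous_ext_loc _ f); [|now apply Hc].
    apply (filter_imp (fun y => 0 < y)); [|now apply locally_gt].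
    intros y Hy. now rewrite Rmax_left by lra.
Qed.

Definition lower_rate (p c a : R) := c * Rpower a p / (Rpower 2 p * (2 * p + 1)).

Definition upper_rate (p c S : R) := c * Rpower S p / (p + 1).

Lemma lower_rate_spec p c a t : 0 < p -> 0 < a -> 0 < t ->
  lower_rate p c a * ((2 * p + 1) * Rpower t (2 * p + 1 - 1)) = c * Rpower (a * t * t / 2) p.
Proof.
  intros Hp Ha Ht. unfold lower_rate.
  replace (a * t * t / 2) with (a * (t * (t * / 2))) by field.
  rewrite <- !Rpower_mult_distr by (try apply Rmult_lt_0_compat; lra).
  replace (2 * p + 1 - 1) with (p + p) by ring. rewrite Rpower_plus.
  replace (Rpower (/ 2) p) with (/ Rpower 2 p)
    by (rewrite <- Rpower_Ropp; unfold Rpower; rewrite ln_Rinv by lra; f_equal; ring).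
  assert (0 < Rpower 2 p) by apply Rpower_gt0. field. lra.
Qed.

Section Solution.

Variables (p c a : R) (x x1 x2 : R -> R).
Hypotheses (hp : 1 <= p) (hc : 0 < c) (ha : 0 < a) (hsol : is_solution p c a x x1 x2).

Let x_derive : forall t, 0 < t -> is_derive x t (x1 t).
Proof. destruct hsol as (H & _); exact H. Qed.
Let x1_derive : forall t, 0 < t -> is_derive x1 t (x2 t).
Proof. destruct hsol as (_ & H & _); exact H. Qed.
Let x2_derive : forall t, 0 < t -> is_derive x2 t (- (c * rpow (x t) p * x2 t)).
Proof. destruct hsol as (_ & _ & H & _); exact H. Qed.
Let x_right_cont : right_cont x 0.
Proof. destruct hsol as (_ & _ & _ & H & _); exact H. Qed.
Let x1_right_cont : right_cont x1 0.
Proof. destruct hsol as (_ & _ & _ & _ & H & _); exact H. Qed.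
Let x2_right_cont : right_cont x2 0.
Proof. destruct hsol as (_ & _ & _ & _ & _ & H & _); exact H. Qed.
Let x_0 : x 0 = 0.
Proof. destruct hsol as (_ & _ & _ & _ & _ & _ & H & _); exact H. Qed.
Let x1_0 : x1 0 = 0.
Proof. destruct hsol as (_ & _ & _ & _ & _ & _ & _ & H & _); exact H. Qed.
Let x2_0 : x2 0 = a.
Proof. destruct hsol as (_ & _ & _ & _ & _ & _ & _ & _ & H); exact H. Qed.

Lemma solution_x2_bounds t : 0 <= t -> 0 < x2 t <= a.
Proof.
  intros Ht.
  set (xp := fun s => rpow (x (Rmax s 0)) p).
  assert (Hxp : forall s, continuous xp s).
  { intros s. apply (continuous_comp (fun y => x (Rmax y 0)) (fun y => rpow y p)).
    - apply continuous_freeze_left; [|exact x_right_cont].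
      intros u Hu. apply (is_derive_continuous _ _ _ (x_derive u Hu)).
    - now apply continuous_rpow. }
  set (X := fun s => RInt xp 0 s).
  assert (HX : forall s, is_derive X s (xp s)).
  { intros s. apply (is_derive_RInt _ _ 0); [|apply Hxp].
    apply filter_forall. intros b. apply (RInt_correct (V:=R_CompleteNormedModule)).
    apply (ex_RInt_continuous (V:=R_CompleteNormedModule)). intros; apply Hxp. }
  assert (HX0 : X 0 = 0) by apply (RInt_point 0 xp).
  assert (HXt : 0 <= X t).
  { rewrite <- HX0. apply (nondecreasing_of_derive_ge0_right_cont X xp 0); auto; try lra.
    - intros; apply rpow_ge0.
    - apply (is_derive_right_cont X 0 _ (HX 0)). }
  set (z := fun s => x2 s * exp (c * X s)).
  assert (Hz : forall s, 0 < s -> is_derive z s 0).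
  { intros s Hs. unfold z.
    replace 0 with (- (c * rpow (x s) p * x2 s) * exp (c * X s) + x2 s * (c * xp s * exp (c * X s)))
      by (unfold xp; rewrite Rmax_left by lra; ring).
    apply (is_derive_Rmult x2 (fun y => exp (c * X y))); [now apply x2_derive|].
    apply (is_derive_exp_comp (fun y => c * X y)), (is_derive_scal X), HX. }
  assert (Hzc : right_cont z 0).
  { apply right_cont_mult; [exact x2_right_cont|]. apply continuous_right_cont, continuous_exp_comp.
    apply (is_derive_continuous _ _ _ (is_derive_scal X 0 c _ (HX 0))). }
  assert (Hz0 : z 0 = a) by (unfold z; rewrite HX0, x2_0, Rmult_0_r, exp_0; ring).
  assert (Hc0 : forall s, is_derive (fun _ => z 0) s 0) by (intros; apply is_derive_Rconst).
  assert (Hcc : right_cont (fun _ => z 0) 0) by apply continuous_right_cont, continuous_const.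
  assert (Hzt : z t = a).
  { rewrite <- Hz0. apply Rle_antisym.
    - apply (le_of_derive_le z (fun _ => z 0) (fun _ => 0) (fun _ => 0) 0); auto; intros; lra.
    - apply (le_of_derive_le (fun _ => z 0) z (fun _ => 0) (fun _ => 0) 0); auto; intros; lra. }
  unfold z in Hzt.
  assert (1 <= exp (c * X t)) by (rewrite <- exp_0; apply exp_le_compat; nra).
  split; nra.
Qed.

Lemma solution_x1_nondecreasing s t : 0 <= s -> s <= t -> x1 s <= x1 t.
Proof.
  apply (nondecreasing_of_derive_ge0_right_cont x1 x2 0); auto.
  intros u Hu. apply Rlt_le, solution_x2_bounds. lra.
Qed.

Lemma solution_x1_le t : 0 <= t -> x1 t <= a * t.
Proof.
  assert (Hd : forall s, is_derive (fun t => a * t) s a) by (intros; auto_derive; auto; ring).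
  apply (le_of_derive_le x1 (fun t => a * t) x2 (fun _ => a) 0); auto.
  - intros s Hs. apply solution_x2_bounds. lra.
  - apply (is_derive_right_cont _ 0 _ (Hd 0)).
  - lra.
Qed.

Lemma solution_x_le t : 0 <= t -> x t <= a * t * t / 2.
Proof.
  assert (Hd : forall s, is_derive (fun t => a * t * t / 2) s (a * s)) by (intros; auto_derive; auto; field).
  apply (le_of_derive_le x (fun t => a * t * t / 2) x1 (fun s => a * s) 0); auto.
  - intros s Hs. apply solution_x1_le. lra.
  - apply (is_derive_right_cont _ 0 _ (Hd 0)).
  - lra.
Qed.

(* Since [x <= a t^2 / 2], the damping rate [c x^p] is at most [c (a t^2 / 2)^p], whose
   primitive is [lower_rate p c a * t^(2p+1)]. *)
Lemma solution_x2_ge t : 0 <= t -> a * stretched_exp (2 * p + 1) (lower_rate p c a) 0 t <= x2 t.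
Proof.
  intros Ht. set (q := 2 * p + 1). set (K := lower_rate p c a).
  set (w := fun s => x2 s * exp (K * rpow s q)).
  assert (Hw : w 0 <= w t).
  { apply (nondecreasing_of_derive_ge0_right_cont w
      (fun s => x2 s * exp (K * rpow s q) * (c * (Rpower (a * s * s / 2) p - rpow (x s) p))) 0);
      auto; try lra.
    - intros s Hs. unfold w.
      replace (x2 s * exp (K * rpow s q) * (c * (Rpower (a * s * s / 2) p - rpow (x s) p)))
        with (- (c * rpow (x s) p * x2 s) * exp (K * rpow s q)
              + x2 s * (K * (q * Rpower s (q - 1)) * exp (K * rpow s q)))
        by (unfold K, q; rewrite lower_rate_spec by lra; ring).
      apply (is_derive_Rmult x2 (fun y => exp (K * rpow y q))); [now apply x2_derive|].
      apply (is_derive_exp_comp (fun y => K * rpow y q)), (is_derive_scal (fun y => rpow y q)).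
      now apply is_derive_rpow.
    - intros s Hs.
      assert (rpow (x s) p <= rpow (a * s * s / 2) p) by (apply rpow_le; [apply solution_x_le|]; lra).
      rewrite (rpow_eq_Rpower (a * s * s / 2)) in H by (apply Rdiv_lt_0_compat; [apply Rmult_lt_0_compat|]; nra).
      assert (0 < x2 s) by (apply solution_x2_bounds; lra).
      assert (0 < exp (K * rpow s q)) by apply exp_pos.
      apply Rmult_le_pos; [apply Rmult_le_pos|]; nra.
    - apply right_cont_mult; [exact x2_right_cont|].
      apply continuous_right_cont, continuous_exp_comp, continuous_Rmult; [apply continuous_const|].
      apply continuous_rpow. unfold q; lra. }
  unfold w in Hw. rewrite x2_0, (rpow_nonpos 0), Rmult_0_r, exp_0, Rmult_1_r in Hw by lra.
  unfold stretched_exp. rewrite pow_O, Rmult_1_l.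
  assert (0 < exp (- (K * rpow t q))) by apply exp_pos.
  replace (x2 t) with (x2 t * exp (K * rpow t q) * exp (- (K * rpow t q)))
    by (rewrite Rmult_assoc, <- exp_plus, Rplus_opp_r, exp_0; ring).
  apply Rmult_le_compat_r; lra.
Qed.

Lemma solution_x1_ge_moment t :
  0 <= t -> a * moment (2 * p + 1) (lower_rate p c a) 0 t <= x1 t.
Proof.
  set (P0 := moment (2 * p + 1) (lower_rate p c a) 0).
  assert (Hd : forall s, is_derive (fun s => a * P0 s) s (a * stretched_exp (2 * p + 1) (lower_rate p c a) 0 s))
    by (intros; apply (is_derive_scal P0), is_derive_moment; lra).
  apply (le_of_derive_le (fun s => a * P0 s) x1
           (fun s => a * stretched_exp (2 * p + 1) (lower_rate p c a) 0 s) x2 0); auto.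
  - intros s Hs. apply solution_x2_ge. lra.
  - apply (is_derive_right_cont _ 0 _ (Hd 0)).
  - unfold P0. rewrite moment_0, x1_0 by lra. lra.
Qed.

Lemma solution_x_ge_moments t : 0 <= t ->
  a * (t * moment (2 * p + 1) (lower_rate p c a) 0 t - moment (2 * p + 1) (lower_rate p c a) 1 t) <= x t.
Proof.
  set (q := 2 * p + 1). set (K := lower_rate p c a).
  set (f := fun s => a * (s * moment q K 0 s - moment q K 1 s)).
  assert (Hd : forall s, is_derive f s (a * moment q K 0 s)).
  { intros s. unfold f.
    replace (a * moment q K 0 s)
      with (a * ((1 * moment q K 0 s + s * stretched_exp q K 0 s) - stretched_exp q K 1 s))
      by (unfold stretched_exp; simpl; ring).
    apply (is_derive_scal (fun s => s * moment q K 0 s - moment q K 1 s)).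
    apply (is_derive_minus (fun s => s * moment q K 0 s)); [|apply is_derive_moment; unfold q; lra].
    apply (is_derive_Rmult (fun s => s)); [apply (is_derive_id (K:=R_AbsRing))|].
    apply is_derive_moment. unfold q; lra. }
  apply (le_of_derive_le f x (fun s => a * moment q K 0 s) x1 0); auto.
  - intros s Hs. apply solution_x1_ge_moment. lra.
  - apply (is_derive_right_cont _ 0 _ (Hd 0)).
  - unfold f. rewrite !moment_0, x_0 by (unfold q; lra). lra.
Qed.

Section Tail.

Variables I0 I1 : R.
Hypotheses (hI0 : 0 < I0) (hI1 : 0 < I1)
  (HI0 : is_lim (moment (2 * p + 1) (lower_rate p c a) 0) p_infty I0)
  (HI1 : is_lim (moment (2 * p + 1) (lower_rate p c a) 1) p_infty I1).

Lemma solution_x_ge_linear t : 0 <= t -> a * I0 * (t - I1 / I0) <= x t.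
Proof.
  intros Ht.
  assert (H := moment_tail_le (2 * p + 1) (lower_rate p c a) I0 I1 t ltac:(lra) HI0 HI1 Ht).
  eapply Rle_trans; [|now apply solution_x_ge_moments].
  replace (a * I0 * (t - I1 / I0)) with (a * (t * I0 - I1)) by (field; lra).
  apply Rmult_le_compat_l; lra.
Qed.

(* Past [I1 / I0] the lower bound [x >= S (t - I1 / I0)] with [S = a I0] damps [x2] at
   least like [exp (- c S^p (t - I1/I0)^(p+1) / (p + 1))]. *)
Lemma solution_x2_le_tail t : I1 / I0 <= t ->
  x2 t <= a * stretched_exp (p + 1) (upper_rate p c (a * I0)) 0 (t - I1 / I0).
Proof.
  intros Ht. set (T := I1 / I0). set (S := a * I0). set (L := upper_rate p c S).
  assert (HT : 0 < T) by (apply Rdiv_lt_0_compat; lra).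
  assert (HS : 0 < S) by (apply Rmult_lt_0_compat; lra).
  set (y := fun s => x2 s * exp (L * rpow (s - T) (p + 1))).
  set (dy := fun s => x2 s * exp (L * rpow (s - T) (p + 1)) * (c * (Rpower (S * (s - T)) p - rpow (x s) p))).
  assert (Hyd : forall s, T < s -> is_derive y s (dy s)).
  { intros s Hs. unfold y, dy.
    replace (x2 s * exp (L * rpow (s - T) (p + 1)) * (c * (Rpower (S * (s - T)) p - rpow (x s) p)))
      with (- (c * rpow (x s) p * x2 s) * exp (L * rpow (s - T) (p + 1))
            + x2 s * (L * ((p + 1) * Rpower (s - T) (p + 1 - 1)) * exp (L * rpow (s - T) (p + 1))))
      by (unfold L, upper_rate; replace (p + 1 - 1) with p by ring;
          rewrite <- Rpower_mult_distr by lra; field; lra).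
    apply (is_derive_Rmult x2 (fun s => exp (L * rpow (s - T) (p + 1)))); [apply x2_derive; lra|].
    apply (is_derive_exp_comp (fun s => L * rpow (s - T) (p + 1))).
    apply (is_derive_shift (fun u => L * rpow u (p + 1))), (is_derive_scal (fun u => rpow u (p + 1))).
    apply is_derive_rpow. lra. }
  assert (Hy : y t <= y T).
  { apply (le_of_derive_le y (fun _ => y T) dy (fun _ => 0) T); auto; try lra.
    - intros; apply is_derive_Rconst.
    - intros s Hs. unfold dy.
      assert (rpow (S * (s - T)) p <= rpow (x s) p).
      { apply rpow_le; [|lra]. unfold S, T. apply solution_x_ge_linear. lra. }
      rewrite rpow_eq_Rpower in H by (apply Rmult_lt_0_compat; lra).
      assert (0 < x2 s) by (apply solution_x2_bounds; lra).
      assert (0 < exp (L * rpow (s - T) (p + 1))) by apply exp_pos.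
      assert (0 <= x2 s * exp (L * rpow (s - T) (p + 1))) by nra.
      assert (c * (Rpower (S * (s - T)) p - rpow (x s) p) <= 0) by nra.
      nra.
    - apply continuous_right_cont, continuous_Rmult.
      + apply (is_derive_continuous _ _ _ (x2_derive T HT)).
      + apply continuous_exp_comp, (continuous_shift (fun u => L * rpow u (p + 1))).
        apply continuous_Rmult; [apply continuous_const | apply continuous_rpow; lra].
    - apply continuous_right_cont, continuous_const. }
  unfold y in Hy. rewrite Rminus_diag, (rpow_nonpos 0), Rmult_0_r, exp_0, Rmult_1_r in Hy by lra.
  assert (x2 T <= a) by (apply solution_x2_bounds; lra).
  unfold stretched_exp. rewrite pow_O, Rmult_1_l.
  assert (0 < exp (- (L * rpow (t - T) (p + 1)))) by apply exp_pos.
  replace (x2 t) with (x2 t * exp (L * rpow (t - T) (p + 1)) * exp (- (L * rpow (t - T) (p + 1))))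
    by (rewrite Rmult_assoc, <- exp_plus, Rplus_opp_r, exp_0; ring).
  apply Rmult_le_compat_r; lra.
Qed.

Lemma solution_x1_le_bound (J : R) :
  (forall T, 0 <= T -> moment (p + 1) (upper_rate p c (a * I0)) 0 T <= J) ->
  forall t, 0 <= t -> x1 t <= a * (I1 / I0) + a * J.
Proof.
  intros HJ t Ht. set (T := I1 / I0). set (L := upper_rate p c (a * I0)).
  assert (HT : 0 < T) by (apply Rdiv_lt_0_compat; lra).
  assert (HJ0 : 0 <= J) by (rewrite <- (moment_0 (p + 1) L 0) by lra; apply HJ; lra).
  assert (HxT : x1 T <= a * T) by (apply solution_x1_le; lra).
  destruct (Rle_or_lt T t) as [HTt|HTt].
  - set (f := fun s => x1 T + a * moment (p + 1) L 0 (s - T)).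
    assert (Hd : forall s, is_derive f s (a * stretched_exp (p + 1) L 0 (s - T))).
    { intros s. unfold f. replace (a * stretched_exp (p + 1) L 0 (s - T))
        with (0 + a * stretched_exp (p + 1) L 0 (s - T)) by ring.
      apply (is_derive_plus (fun _ => x1 T)); [apply is_derive_Rconst|].
      apply (is_derive_scal (fun s => moment (p + 1) L 0 (s - T))), is_derive_shift, is_derive_moment.
      lra. }
    assert (x1 t <= f t).
    { apply (le_of_derive_le x1 f x2 (fun s => a * stretched_exp (p + 1) L 0 (s - T)) T); auto.
      - intros; apply x1_derive; lra.
      - intros s Hs. apply solution_x2_le_tail. unfold T in Hs. lra.
      - apply continuous_right_cont, (is_derive_continuous _ _ _ (x1_derive T HT)).
      - apply (is_derive_right_cont _ _ _ (Hd T)).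
      - unfold f. rewrite Rminus_diag, moment_0 by lra. lra. }
    assert (moment (p + 1) L 0 (t - T) <= J) by (apply HJ; lra).
    unfold f in *. nra.
  - assert (x1 t <= x1 T) by (apply solution_x1_nondecreasing; lra).
    assert (0 <= a * J) by (apply Rmult_le_pos; lra).
    fold T. lra.
Qed.

End Tail.

End Solution.

Ltac Rpos := repeat (assumption || apply Rmult_lt_0_compat || apply Rinv_0_lt_compat
                     || apply Rdiv_lt_0_compat || apply Rpower_gt0); try lra.

Ltac ln_expand :=
  repeat (rewrite ln_Rpower || (rewrite ln_mult by Rpos) || (rewrite ln_div by Rpos)).

Section Constants.

Variables p c a : R.
Hypotheses (hp : 1 <= p) (hc : 0 < c) (ha : 0 < a).

Let q := 2 * p + 1.
Let A := Rpower a ((p + 1) / q).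

Let q_ge1 : 1 <= q.
Proof. unfold q; lra. Qed.

Let lower_rate_gt0 : 0 < lower_rate p c a.
Proof. unfold lower_rate; Rpos. Qed.

Let ln_lower_rate : ln (lower_rate p c a) = ln c + p * ln a - p * ln 2 - ln q.
Proof. unfold lower_rate. rewrite ln_div, !ln_mult, !ln_Rpower by Rpos. unfold q. ring. Qed.

Lemma const2_spec (I0 : R) : is_lim (moment q (lower_rate p c a) 0) p_infty I0 ->
  const2 p c * A = a * I0.
Proof.
  intros HI0. unfold const2. fold q.
  rewrite (Gamma_eq_moment_limit q (lower_rate p c a) 0 (1 / q) I0 q_ge1 lower_rate_gt0
             ltac:(simpl; unfold q; field; lra) HI0).
  enough (E : q * Rpower (lower_rate p c a) (1 / q) *
              Rpower (Rpower 2 p / (c * Rpower q (2 * p))) (1 / q) * A = a)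
    by (rewrite <- E at 2; ring).
  apply ln_inv; [unfold A, q; Rpos | lra |].
  unfold A. ln_expand. rewrite ln_lower_rate. unfold q. field. lra.
Qed.

Lemma const3_div_const2_spec (I0 I1 : R) :
  is_lim (moment q (lower_rate p c a) 0) p_infty I0 ->
  is_lim (moment q (lower_rate p c a) 1) p_infty I1 -> 0 < I0 ->
  const3 p c / const2 p c * A = a * (I1 / I0).
Proof.
  intros HI0 HI1 HI0p. unfold const3, const2. fold q.
  rewrite (Gamma_eq_moment_limit q (lower_rate p c a) 0 (1 / q) I0 q_ge1 lower_rate_gt0
             ltac:(simpl; unfold q; field; lra) HI0).
  rewrite (Gamma_eq_moment_limit q (lower_rate p c a) 1 (2 / q) I1 q_ge1 lower_rate_gt0
             ltac:(simpl; unfold q; field; lra) HI1).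
  set (K1 := Rpower (lower_rate p c a) (1 / q)). set (K2 := Rpower (lower_rate p c a) (2 / q)).
  set (X := Rpower (Rpower 2 p / (c * Rpower q (2 * p))) (1 / q)).
  set (Q := Rpower q ((1 - 2 * p) / q)). set (Y := Rpower (Rpower 2 p / c) (2 / q)).
  assert (E : K2 * Q * Y * A = a * (K1 * X)).
  { apply ln_inv; [unfold K2, Q, Y, A; Rpos | unfold K1, X; Rpos |].
    unfold K1, K2, X, Q, Y, A. ln_expand. rewrite ln_lower_rate. unfold q. field. lra. }
  assert (0 < K1) by apply Rpower_gt0. assert (0 < X) by apply Rpower_gt0.
  transitivity ((I1 / I0) * (K2 * Q * Y * A) / (K1 * X)); [field; unfold q; repeat split; lra|].
  rewrite E. field. repeat split; lra.
Qed.

Lemma Gamma_term_spec (I0 J : R) :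
  is_lim (moment q (lower_rate p c a) 0) p_infty I0 -> 0 < I0 ->
  is_lim (moment (p + 1) (upper_rate p c (a * I0)) 0) p_infty J ->
  Gamma (1 / (p + 1)) / (Rpower c (1 / (p + 1)) * Rpower (const2 p c * (p + 1)) (p / (p + 1))) * A
  = a * J.
Proof.
  intros HI0 HI0p HJ.
  assert (Hc2 : const2 p c * A = a * I0) by now apply const2_spec.
  assert (Hc2p : 0 < const2 p c).
  { assert (0 < A) by apply Rpower_gt0. assert (0 < const2 p c * A) by (rewrite Hc2; Rpos). nra. }
  rewrite (Gamma_eq_moment_limit (p + 1) (upper_rate p c (a * I0)) 0 (1 / (p + 1)) J ltac:(lra)
             ltac:(unfold upper_rate; Rpos) ltac:(simpl; field; lra) HJ).
  rewrite <- Hc2.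
  set (D := Rpower c (1 / (p + 1)) * Rpower (const2 p c * (p + 1)) (p / (p + 1))).
  assert (0 < D) by (unfold D; Rpos).
  assert (E : (p + 1) * Rpower (upper_rate p c (const2 p c * A)) (1 / (p + 1)) * A = a * D).
  { apply ln_inv; [unfold A; Rpos | unfold D; Rpos |].
    unfold upper_rate, D, A. ln_expand. unfold q. field. lra. }
  transitivity (J * ((p + 1) * Rpower (upper_rate p c (const2 p c * A)) (1 / (p + 1)) * A) / D);
    [field; lra|].
  rewrite E. field. lra.
Qed.

End Constants.

Theorem lemma4 (p c : R) (hp : 1 <= p) (hc : 0 < c) :
  forall (a : R) (x x1 x2 : R -> R),
    0 < a ->
    is_solution p c a x x1 x2 ->
    exists h : R,
      is_lim x1 p_infty h /\
      const2 p c * Rpower a ((p + 1) / (2 * p + 1)) <= h /\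
      h <= const1 p c * Rpower a ((p + 1) / (2 * p + 1)).
Proof.
  intros a x x1 x2 ha Hs.
  assert (HK : 0 < lower_rate p c a) by (unfold lower_rate; Rpos).
  destruct (moment_limit (2 * p + 1) (lower_rate p c a) 0) as (I0 & I0p & HI0 & _); auto; try lra.
  destruct (moment_limit (2 * p + 1) (lower_rate p c a) 1) as (I1 & I1p & HI1 & _); auto; try lra.
  assert (HL : 0 < upper_rate p c (a * I0)) by (unfold upper_rate; Rpos).
  destruct (moment_limit (p + 1) (upper_rate p c (a * I0)) 0) as (J & _ & HJ & HJb); auto; try lra.
  destruct (is_lim_of_nondecreasing_bounded x1 (a * (I1 / I0) + a * J)) as (h & Hh & _).
  { intros s t; now apply (solution_x1_nondecreasing p c a x x1 x2). }
  { now apply (solution_x1_le_bound p c a x x1 x2 hp hc ha Hs I0 I1). }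
  exists h. split; [exact Hh | split].
  - rewrite (const2_spec p c a hp hc ha I0 HI0).
    apply (is_lim_le_eventually (fun t => a * moment (2 * p + 1) (lower_rate p c a) 0 t) x1
             (a * I0) h 0 (is_lim_scal_l _ a _ I0 HI0) Hh).
    intros t Ht. now apply (solution_x1_ge_moment p c a x x1 x2).
  - unfold const1. rewrite Rmult_plus_distr_r.
    rewrite (const3_div_const2_spec p c a hp hc ha I0 I1), (Gamma_term_spec p c a hp hc ha I0 J) by auto.
    apply (is_lim_le_eventually x1 (fun _ => a * (I1 / I0) + a * J) h _ 0 Hh (is_lim_const _ _)).
    intros t Ht. now apply (solution_x1_le_bound p c a x x1 x2 hp hc ha Hs I0 I1).
Qed.
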